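(* The size $z_{SS}$ of the non-self-referencing LZSS factorization satisfies: substitutions: $\limsup_{n\to\infty}\mathsf{MS}_{\mathrm{sub}}(z_{SS},n)\le 3$ and $\mathsf{AS}_{\mathrm{sub}}(z_{SS},n)\le 2z_{SS}-2$; insertions: $\mathsf{MS}_{\mathrm{ins}}(z_{SS},n)\le 2$ and $\mathsf{AS}_{\mathrm{ins}}(z_{SS},n)\le z_{SS}$; deletions: $\limsup_{n\to\infty}\mathsf{MS}_{\mathrm{del}}(z_{SS},n)\le 3$ and $\mathsf{AS}_{\mathrm{del}}(z_{SS},n)\le 2z_{SS}-3$, where $\mathsf{AS}_\ast(z_{SS},n)\le a z_{SS}-c$ means $z_{SS}(T')-z_{SS}(T)\le a\,z_{SS}(T)-c$ for all $T$ of length $n$ and all $T'$ obtained from $T$ by one edit of that type.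
   Context: Strings are over an alphabet $\Sigma$; $\mathsf{ed}$ is the edit distance. $\mathsf{MS}_{\mathrm{sub}}(C,n)=\max_{T\in\Sigma^n}\{C(T')/C(T): T'\in\Sigma^n,\ \mathsf{ed}(T,T')=1\}$, with $\mathsf{MS}_{\mathrm{ins}},\mathsf{MS}_{\mathrm{del}}$ analogous for $T'$ of length $n+1$, resp. $n-1$, and $\mathsf{AS}_\ast$ analogous with $C(T')-C(T)$. The non-self-referencing LZSS factorization of $T$ is $T=f_1\cdots f_z$ where each $f_i$ is either the first occurrence in $T$ of a character, or the longest prefix of $f_i\cdots f_z$ that occurs as a substring of $f_1\cdots f_{i-1}$; $z_{SS}(T)=z$. *)

From mathcomp Require Import all_boot all_order all_algebra.
Set Implicit Arguments. Unset Strict Implicit. Unset Printing Implicit Defensive.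

Section LZSS.
Variable A : eqType.

(* Levenshtein edit distance (unit-cost insertions, deletions, substitutions). *)
Fixpoint ed (s t : seq A) {struct s} : nat :=
  match s with
  | [::] => size t
  | a :: s' =>
      let fix edt (t : seq A) : nat :=
        match t with
        | [::] => size s
        | b :: t' => minn (minn (ed s' t).+1 (edt t').+1) (ed s' t' + (a != b))
        end in
      edt t
  end.

Definition longest_prefix_in (P R : seq A) : nat :=
  foldr maxn 0 [seq k <- iota 0 (size R).+1 | infix (take k R) P].

(* Greedy non-self-referencing LZSS factorization of the remaining text R,
   given the already-factorized prefix P.  A factor is the longest prefix of R
   occurring in P, or a single (fresh) character if that prefix is empty. *)
Fixpoint lzss_aux (fuel : nat) (P R : seq A) : seq (seq A) :=
  match fuel with
  | 0 => [::]
  | fuel'.+1 =>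
      match R with
      | [::] => [::]
      | _ :: _ =>
          let k := maxn (longest_prefix_in P R) 1 in
          take k R :: lzss_aux fuel' (P ++ take k R) (drop k R)
      end
  end.

Definition lzss (T : seq A) : seq (seq A) := lzss_aux (size T) [::] T.

Definition z_SS (T : seq A) : nat := size (lzss T).

End LZSS.

From mathcomp Require Import all_boot all_order all_algebra zify.
Import Order.TTheory GRing.Theory Num.Theory.

(* Greedy parsing is optimal: z_SS T is the least number of nonempty phrases in
   any parse of T whose phrases are single characters or factors of the text
   before them.  Let T = U x V be edited into T' = U m V, with |x|, |m| <= 1.
   In the LZSS parse of T keep the a phrases before the edit, cut the phrase
   containing it into the parts before and after it plus m, and cut each of the
   r later phrases at the edited position of its source, into a factor of U, a
   single character and a factor of the text after x.  This parses T' with at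
   most a + 2 + |m| + (2 + |x|) r phrases, while z_SS T = a + 1 + r; when a = 0
   the edited phrase is a single character, which saves |x| + 1 more. *)

Lemma ler_nat_scale_slack (R : numDomainType) (k z z' : nat) (eps : R) :
  (0 <= eps)%R -> (z' <= k * z)%N -> (z'%:R <= (k%:R + eps) * z%:R)%R.
Proof.
move=> eps_ge0 z'_le; apply: (@le_trans _ _ (k * z)%:R%R); first by rewrite ler_nat.
by rewrite natrM ler_wpM2r // lerDl.
Qed.

Section EditDistance.
Context {A : eqType}.
Implicit Types s t : seq A.

Lemma ed_cons (a b : A) s t : ed (a :: s) (b :: t) =
  minn (minn (ed s (b :: t)).+1 (ed (a :: s) t).+1) (ed s t + (a != b)).
Proof. by []. Qed.

Lemma ed_refl s : ed s s = 0.
Proof. by elim: s => // a s IH; rewrite ed_cons eqxx IH minn0. Qed.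

Lemma ed_eq0 {s t} : ed s t = 0 -> s = t.
Proof.
elim: s t => [|a s IH] [|b t] //; rewrite ed_cons; case: eqVneq => [<-|_] /=; last lia.
by move=> h; rewrite (IH t) //; lia.
Qed.

Lemma ed_le1_edit {s t} : ed s t <= 1 -> exists U x m V : seq A,
  [/\ size x <= 1, size m <= 1, s = U ++ x ++ V & t = U ++ m ++ V].
Proof.
elim: s t => [|a s IH] [|b t] e.
- by exists [::], [::], [::], [::].
- by case: t e => // _; exists [::], [::], [:: b], [::].
- by case: s {IH} e => // _; exists [::], [:: a], [::], [::].
rewrite ed_cons in e.
have [s_eq|[t_eq|st_le]] : ed s (b :: t) = 0 \/ ed (a :: s) t = 0 \/ ed s t + (a != b) <= 1.
  by lia.
- by exists [::], [:: a], [::], s; rewrite (ed_eq0 s_eq).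
- by exists [::], [::], [:: b], (a :: s); rewrite (ed_eq0 t_eq).
case: eqVneq st_le => [<-|_] /= st_le.
  have [U [x [m [V [x_small m_small -> ->]]]]] := IH t ltac:(lia).
  by exists (a :: U), x, m, V.
by exists [::], [:: a], [:: b], s; rewrite (@ed_eq0 s t) //; lia.
Qed.

Lemma ed_eq1_edit {s t} : ed s t = 1 -> exists U x m V : seq A,
  [/\ size x <= 1, size m <= 1, 0 < size x + size m, s = U ++ x ++ V & t = U ++ m ++ V].
Proof.
move=> e; have [U [x [m [V [x_small m_small sE tE]]]]] := ed_le1_edit (eq_leq e).
exists U, x, m, V; split=> //; case: (posnP (size x + size m)) => // /eqP.
rewrite addn_eq0 !size_eq0 => /andP[/eqP x0 /eqP m0].
by move: e; rewrite sE tE x0 m0 ed_refl.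
Qed.

End EditDistance.

Section Factorizations.
Context {A : eqType}.
Implicit Types (s t u pre P R T U V W x m g : seq A) (gs : seq (seq A)).

Lemma cat_eq_cat {s1 s2 t1 t2} : s1 ++ s2 = t1 ++ t2 ->
  exists u, (s1 = t1 ++ u /\ t2 = u ++ s2) \/ (t1 = s1 ++ u /\ s2 = u ++ t2).
Proof.
elim: s1 t1 => [|a s1 IH] [|b t1] /=.
- by move=> ->; exists [::]; left.
- by move=> ->; exists (b :: t1); right.
- by move=> <-; exists (a :: s1); left.
- by case=> -> /IH [u [[-> ->]|[-> ->]]]; exists u; [left|right].
Qed.

Lemma infix_cat_split g s1 s2 : infix g (s1 ++ s2) ->
  exists g1 g2, [/\ g = g1 ++ g2, infix g1 s1 & infix g2 s2].
Proof.
case/infixP=> p [q /cat_eq_cat [u [[-> /cat_eq_cat [w [[-> ->]|[-> _]]]]|[_ ->]]]].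
- by exists u, w; rewrite suffix_infix prefix_infix.
- by exists g, [::]; rewrite cats0 infix_infix infix0s.
- by exists [::], g; rewrite infix0s infix_infix.
Qed.

Lemma longest_prefix_in_max P R k :
  k <= size R -> infix (take k R) P -> k <= longest_prefix_in P R.
Proof.
move=> kR kP; rewrite /longest_prefix_in foldrE big_filter.
by apply: (leq_bigmax_seq k) => //; rewrite mem_iota.
Qed.

Lemma longest_prefix_inP P R : infix (take (longest_prefix_in P R) R) P.
Proof.
rewrite /longest_prefix_in foldrE big_filter.
apply: (big_ind (fun k => infix (take k R) P)) => // [|k l kP lP].
  by rewrite take0 infix0s.
by rewrite /maxn; case: ltnP.
Qed.

(* Parses in the sense of non-self-referencing LZSS, of which [lzss] is the
   greedy one.  Empty phrases are allowed and are not counted by [nphrases]. *)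
Definition lz_phrase pre g : bool := (size g <= 1) || infix g pre.

Fixpoint lz_parse pre gs : bool :=
  if gs is g :: gs' then lz_phrase pre g && lz_parse (pre ++ g) gs' else true.

Definition nphrases gs : nat := count (fun g => 0 < size g) gs.

Lemma lz_phrase_infix pre t s g : infix s g -> lz_phrase pre g -> lz_phrase (pre ++ t) s.
Proof.
move=> sg /orP[g_small|g_in]; apply/orP.
  by left; apply: leq_trans (size_subseq (infixW sg)) g_small.
by right; apply: infix_catr; apply: infix_trans sg g_in.
Qed.

Lemma lz_phrase_nil g : lz_phrase [::] g = (size g <= 1).
Proof. by rewrite /lz_phrase infixs0; case: g => // a [|b g]. Qed.

Lemma nphrases_cons g gs : nphrases (g :: gs) = (0 < size g) + nphrases gs.
Proof. by []. Qed.

Lemma nphrases_all {gs} : all (fun g => 0 < size g) gs -> nphrases gs = size gs.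
Proof. by rewrite all_count => /eqP. Qed.

Lemma nphrases_cat gs1 gs2 : nphrases (gs1 ++ gs2) = nphrases gs1 + nphrases gs2.
Proof. exact: count_cat. Qed.

Lemma lz_parse_cat pre gs1 gs2 :
  lz_parse pre (gs1 ++ gs2) = lz_parse pre gs1 && lz_parse (pre ++ flatten gs1) gs2.
Proof.
elim: gs1 pre => [|g gs1 IH] pre /=; first by rewrite cats0.
by rewrite IH catA andbA.
Qed.

Lemma lzss_aux_spec fuel P R : size R <= fuel ->
  [/\ lz_parse P (lzss_aux fuel P R), flatten (lzss_aux fuel P R) = R
    & all (fun g => 0 < size g) (lzss_aux fuel P R)].
Proof.
elim: fuel P R => [|fuel IH] P [|r R] //= hR.
set k := maxn _ 1.
have k_gt0 : 0 < k by rewrite leq_max orbT.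
have phrase_ok : lz_phrase P (take k (r :: R)).
  rewrite /lz_phrase /k; case: (leqP (longest_prefix_in P (r :: R)) 1) => _.
    by rewrite /= take0.
  by rewrite longest_prefix_inP orbT.
have [IHparse IHflat IHall] :=
  IH (P ++ take k (r :: R)) (drop k (r :: R)) ltac:(rewrite size_drop /= in hR *; lia).
rewrite phrase_ok IHparse IHflat cat_take_drop IHall size_take_min /=.
split=> //; lia.
Qed.

Lemma cat_split_inside {pre g s P R} : pre ++ g ++ s = P ++ R ->
  size pre <= size P < size pre + size g ->
  exists u u2, [/\ P = pre ++ u, g = u ++ u2 & R = u2 ++ s].
Proof.
move=> E /andP[preP Pg]; have [u [[preE RE]|[Pu gsR]]] := cat_eq_cat E.
  have u0 : u = [::] by apply: size0nil; move: preP; rewrite preE size_cat; lia.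
  by exists [::], g; rewrite preE RE u0 !cats0.
have [u2 [[gE RE]|[uE _]]] := cat_eq_cat gsR; first by exists u, u2.
by move: Pg; rewrite Pu uE !size_cat; lia.
Qed.

(* Greedy stays ahead: the greedy factor starting inside a phrase [g] of any
   valid parse reaches at least the end of [g], since the rest of [g] is a
   factor of the text already read. *)
Lemma lzss_aux_min gs pre fuel P R : lz_parse pre gs ->
  pre ++ flatten gs = P ++ R -> size pre <= size P ->
  size (lzss_aux fuel P R) <= nphrases gs.
Proof.
elim: gs pre fuel P R => [|g gs IH] pre fuel P R /=.
  move=> _; rewrite cats0 => E preP.
  have -> : R = [::] by apply: size0nil; move/(congr1 size): E; rewrite size_cat; lia.
  by case: fuel.
case/andP=> g_ok gs_ok E preP.
have [behind|ahead] := leqP (size (pre ++ g)) (size P).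
  by apply: leq_trans (IH _ _ _ _ gs_ok _ behind) (leq_addl _ _); rewrite -catA.
case: fuel => [|fuel] //; case: R E => [|r R] E //=.
have [u [u2 [Pu gu Ru]]] := cat_split_inside E ltac:(rewrite size_cat in ahead; lia).
set k := maxn _ 1.
have u2_le_k : size u2 <= k.
  case/orP: g_ok => [g_small|g_in].
    by apply: leq_trans (leq_maxr _ 1); move: g_small; rewrite gu size_cat; lia.
  apply: leq_trans (leq_maxl _ 1); apply: longest_prefix_in_max.
    by rewrite Ru size_cat leq_addr.
  rewrite Ru take_size_cat // Pu.
  by apply: infix_trans (suffix_infix u u2) (infix_catr _ _); rewrite -gu.
have u2_le_R : size u2 <= size (r :: R) by rewrite Ru size_cat leq_addr.
have g_gt0 : 0 < size g by rewrite size_cat in ahead; lia.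
rewrite g_gt0 add1n ltnS; apply: (IH (pre ++ g)) => //.
  by rewrite -!catA cat_take_drop.
by rewrite !size_cat size_take_min Pu gu !size_cat; lia.
Qed.

Lemma lzss_spec T :
  [/\ lz_parse [::] (lzss T), flatten (lzss T) = T & all (fun g => 0 < size g) (lzss T)].
Proof. exact: lzss_aux_spec. Qed.

Lemma z_SS_min T gs : lz_parse [::] gs -> flatten gs = T -> z_SS T <= nphrases gs.
Proof. by move=> ok <-; exact: (@lzss_aux_min gs [::] _ [::] _ ok). Qed.

Lemma nphrases_lzss T : nphrases (lzss T) = z_SS T.
Proof. by have [_ _ /nphrases_all] := lzss_spec T. Qed.

Lemma z_SS_gt0 {T} : 0 < size T -> 0 < z_SS T.
Proof. by case: T. Qed.

Lemma z_SS_cat_small T m : size m <= 1 -> z_SS (T ++ m) <= z_SS T + size m.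
Proof.
have [ok flat _] := lzss_spec T; move=> m_small.
apply: leq_trans (@z_SS_min _ (lzss T ++ [:: m]) _ _) _.
- by rewrite lz_parse_cat ok /= /lz_phrase m_small.
- by rewrite flatten_cat flat /= cats0.
- by rewrite nphrases_cat nphrases_lzss /= addn0 leq_add2l; case: m m_small.
Qed.

Lemma lz_parse_edit_tail U x m gs V1 : size x <= 1 -> lz_parse (U ++ x ++ V1) gs ->
  exists gs', [/\ lz_parse (U ++ m ++ V1) gs', flatten gs' = flatten gs
                & nphrases gs' <= (2 + size x) * nphrases gs].
Proof.
move=> x_small; elim: gs V1 => [|g gs IH] V1 /=; first by exists [::].
case/andP=> g_ok; rewrite -!catA => /IH[gs' [ok' flat' count']].
have [g_small|g_big] := leqP (size g) 1.
  exists (g :: gs'); rewrite /= /lz_phrase g_small -!catA ok' flat'.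
  by split=> //; rewrite mulnDr leq_add // leq_pmull.
move: g_ok; rewrite /lz_phrase leqNgt g_big /= => g_in.
case/infix_cat_split: g_in ok' g_big.
move=> g1 [g23 [-> g1U /infix_cat_split[g2 [g3 [-> g2x g3V1]]]]] ok' g_big.
have /size_subseq g2_small := infixW g2x.
have g1_ok : infix g1 (U ++ m ++ V1) by exact: infix_catr.
have g3_ok : infix g3 (U ++ m ++ V1 ++ g1 ++ g2).
  by do 2 apply: infix_catl; apply: infix_catr.
exists [:: g1, g2, g3 & gs']; split.
- by rewrite /= /lz_phrase g1_ok (leq_trans g2_small) // -!catA g3_ok ok' !orbT.
- by rewrite /= flat' !catA.
- rewrite !nphrases_cons; rewrite !size_cat in g_big *; nia.
Qed.

Lemma flatten_split_at_edit {gs U x V} : size x <= 1 -> 0 < size (x ++ V) ->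
  flatten gs = U ++ x ++ V -> exists gsA g gsB W V1,
  [/\ gs = gsA ++ g :: gsB, U = flatten gsA ++ W, g = W ++ x ++ V1 & V = V1 ++ flatten gsB].
Proof.
move=> x_small xV_gt0; elim: gs U => [|h gs IH] U /=.
  by move/(congr1 size); rewrite !size_cat /= in xV_gt0 *; lia.
have skip u : U = h ++ u -> flatten gs = u ++ x ++ V -> exists gsA g gsB W V1,
    [/\ h :: gs = gsA ++ g :: gsB, U = flatten gsA ++ W, g = W ++ x ++ V1
       & V = V1 ++ flatten gsB].
  move=> Uh /IH[gsA [g [gsB [W [V1 [gsE uE gE VE]]]]]].
  by exists (h :: gsA), g, gsB, W, V1; rewrite gsE Uh uE catA.
case/cat_eq_cat=> u [[hU xVE]|[Uh gsE]]; last exact: skip gsE.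
have [/size0nil u0|u_gt0] := posnP (size u).
  by subst u; apply: (skip [::]); rewrite /= ?hU ?xVE ?cats0.
exists [::], h, gs, U; case/cat_eq_cat: xVE => [w [[xE gsE]|[uE VE]]].
  have w0 : w = [::] by apply: size0nil; move: x_small; rewrite xE size_cat; lia.
  by exists [::]; rewrite hU xE gsE w0 !cats0.
by exists w; rewrite hU uE.
Qed.

Lemma lz_parse_edit {gsA g gsB W x m V1} : size x <= 1 -> size m <= 1 ->
  lz_parse [::] (gsA ++ g :: gsB) -> g = W ++ x ++ V1 ->
  exists gs', [/\ lz_parse [::] gs',
    flatten gs' = flatten gsA ++ W ++ m ++ V1 ++ flatten gsB
    & nphrases gs' <= nphrases gsA + (0 < size W) + size m + (0 < size V1)
                      + (2 + size x) * nphrases gsB].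
Proof.
move=> x_small m_small; rewrite lz_parse_cat => /andP[okA /= /andP[g_ok okB]] gE.
have [gs'' [ok'' flat'' count'']] :=
  @lz_parse_edit_tail (flatten gsA ++ W) x m gsB V1 x_small ltac:(by rewrite -!catA -gE).
exists (gsA ++ [:: W, m, V1 & gs'']); split.
- have W_ok : lz_phrase (flatten gsA ++ [::]) W.
    by apply: lz_phrase_infix g_ok; rewrite gE prefix_infix.
  have V1_ok : lz_phrase (flatten gsA ++ W ++ m) V1.
    by apply: lz_phrase_infix g_ok; rewrite gE catA suffix_infix.
  rewrite cats0 in W_ok; rewrite -catA in ok''.
  by rewrite lz_parse_cat okA /= -!catA W_ok V1_ok ok'' /lz_phrase m_small.
- by rewrite flatten_cat /= flat''.
- have m_ind : (0 < size m) <= size m by case: (size m).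
  rewrite nphrases_cat !nphrases_cons; lia.
Qed.

(* [a] and [r] count the LZSS phrases before and after the one containing the edit. *)
Lemma z_SS_edit U x m V : size x <= 1 -> size m <= 1 -> 0 < size (x ++ V) ->
  exists a r, [/\ z_SS (U ++ x ++ V) = a + 1 + r,
    z_SS (U ++ m ++ V) <= a + 2 + size m + (2 + size x) * r &
    a = 0 -> z_SS (U ++ m ++ V) + size x <= 1 + size m + (2 + size x) * r].
Proof.
move=> x_small m_small xV_gt0.
have [ok flat all_gt0] := lzss_spec (U ++ x ++ V).
have [gsA [g [gsB [W [V1 [gsE UE gE VE]]]]]] := flatten_split_at_edit x_small xV_gt0 flat.
rewrite gsE in ok all_gt0.
have [gs' [ok' flat' count']] := lz_parse_edit x_small m_small ok gE.
have z'_le : z_SS (U ++ m ++ V) <= nphrases gs'.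
  by apply: z_SS_min ok' _; rewrite flat' UE VE !catA.
move: all_gt0; rewrite all_cat /= => /and3P[allA _ allB].
have nA := nphrases_all allA; have nB := nphrases_all allB.
exists (size gsA), (size gsB); split.
- by rewrite /z_SS gsE size_cat /=; lia.
- by rewrite nA nB in count'; lia.
- move=> /size0nil gsA0; rewrite gsA0 /= lz_phrase_nil in ok.
  move: ok => /andP[g_small _]; move: g_small; rewrite gE !size_cat.
  rewrite gsA0 nB /= in count'; lia.
Qed.

Lemma z_SS_subst {T T'} :
  size T' = size T -> ed T T' = 1 -> z_SS T' + 2 <= 3 * z_SS T.
Proof.
move=> sizeE /ed_eq1_edit[U [x [m [V [x_small m_small xm_gt0 TE T'E]]]]].
move: sizeE; rewrite TE T'E !size_cat => sizeE.
have [x1 m1] : size x = 1 /\ size m = 1 by lia.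
have [a [r [-> z'_le z'_le0]]] := @z_SS_edit U x m V x_small m_small
  ltac:(by rewrite size_cat x1).
by rewrite x1 m1 in z'_le z'_le0; lia.
Qed.

Lemma z_SS_insert {T T'} :
  0 < size T -> size T' = (size T).+1 -> ed T T' = 1 -> z_SS T' <= 2 * z_SS T.
Proof.
move=> T_gt0 sizeE /ed_eq1_edit[U [x [m [V [x_small m_small xm_gt0 TE T'E]]]]].
have z_gt0 := z_SS_gt0 T_gt0; subst T T'.
move: sizeE; rewrite !size_cat => sizeE.
have [/size0nil x0 m1] : size x = 0 /\ size m = 1 by lia.
subst x.
have [/size0nil V0|V_gt0] := posnP (size V).
  rewrite V0 !cats0 in z_gt0 *.
  by have := @z_SS_cat_small U m m_small; lia.
have [a [r [zE z'_le z'_le0]]] := @z_SS_edit U [::] m V isT m_small V_gt0.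
by rewrite m1 in z'_le z'_le0; rewrite zE; lia.
Qed.

Lemma z_SS_delete {T T'} :
  size T' = (size T).-1 -> ed T T' = 1 -> z_SS T' + 3 <= 3 * z_SS T.
Proof.
move=> sizeE /ed_eq1_edit[U [x [m [V [x_small m_small xm_gt0 TE T'E]]]]].
move: sizeE; rewrite TE T'E !size_cat => sizeE.
have [x1 m0] : size x = 1 /\ size m = 0 by lia.
have [a [r [-> z'_le z'_le0]]] := @z_SS_edit U x m V x_small m_small
  ltac:(by rewrite size_cat x1).
by rewrite x1 m0 in z'_le z'_le0; lia.
Qed.

End Factorizations.

Theorem mainTheorem13 (A : eqType) :
  (* substitutions: limsup_n MS_sub(z_SS, n) <= 3 *)
  (forall eps : rat, (0 < eps)%R -> exists N : nat, forall n : nat, (N <= n)%N ->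
     forall T T' : seq A, size T = n -> size T' = n -> ed T T' = 1%N ->
       ((z_SS T')%:R <= (3%:R + eps) * (z_SS T)%:R :> rat)%R) /\
  (* substitutions: AS_sub(z_SS, n) <= 2 z_SS - 2 *)
  (forall (n : nat) (T T' : seq A), (0 < n)%N -> size T = n -> size T' = n -> ed T T' = 1%N ->
     ((z_SS T')%:Z - (z_SS T)%:Z <= 2%:Z * (z_SS T)%:Z - 2%:Z)%R) /\
  (* insertions: MS_ins(z_SS, n) <= 2 *)
  (forall (n : nat) (T T' : seq A), (0 < n)%N -> size T = n -> size T' = n.+1 -> ed T T' = 1%N ->
     ((z_SS T')%:R <= 2%:R * (z_SS T)%:R :> rat)%R) /\
  (* insertions: AS_ins(z_SS, n) <= z_SS *)
  (forall (n : nat) (T T' : seq A), (0 < n)%N -> size T = n -> size T' = n.+1 -> ed T T' = 1%N ->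
     ((z_SS T')%:Z - (z_SS T)%:Z <= (z_SS T)%:Z)%R) /\
  (* deletions: limsup_n MS_del(z_SS, n) <= 3 *)
  (forall eps : rat, (0 < eps)%R -> exists N : nat, forall n : nat, (N <= n)%N ->
     forall T T' : seq A, size T = n -> size T' = n.-1 -> ed T T' = 1%N ->
       ((z_SS T')%:R <= (3%:R + eps) * (z_SS T)%:R :> rat)%R) /\
  (* deletions: AS_del(z_SS, n) <= 2 z_SS - 3 *)
  (forall (n : nat) (T T' : seq A), (0 < n)%N -> size T = n -> size T' = n.-1 -> ed T T' = 1%N ->
     ((z_SS T')%:Z - (z_SS T)%:Z <= 2%:Z * (z_SS T)%:Z - 3%:Z)%R).
Proof.
split; [|split; [|split; [|split; [|split]]]].
- move=> eps eps_gt0; exists 0 => n _ T T' <- sizeE e.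
  by apply: ler_nat_scale_slack (ltW eps_gt0) _; have := z_SS_subst sizeE e; lia.
- by move=> n T T' _ <- sizeE e; have := z_SS_subst sizeE e; lia.
- move=> n T T' n_gt0 sizeT sizeE e; subst n.
  by rewrite -natrM ler_nat z_SS_insert.
- move=> n T T' n_gt0 sizeT sizeE e; subst n.
  by have := z_SS_insert n_gt0 sizeE e; lia.
- move=> eps eps_gt0; exists 0 => n _ T T' <- sizeE e.
  by apply: ler_nat_scale_slack (ltW eps_gt0) _; have := z_SS_delete sizeE e; lia.
- by move=> n T T' _ <- sizeE e; have := z_SS_delete sizeE e; lia.
Qed.
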